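(* Let $0\neq h\in\mathbb{F}[x]$ and let $u_1,\dots,u_\ell$ be the distinct monic irreducible factors of $h$ in $\mathbb{F}[x]$ that are not central in $A_h$. Then an element $v\in A_h$ is normal (i.e. $vA_h=A_hv$) if and only if $v=u_1^{\beta_1}\cdots u_\ell^{\beta_\ell}z$ for some integers $\beta_i\ge0$ and some $z$ in the center $Z(A_h)$. If $\mathrm{char}(\mathbb{F})=p>0$, the exponents may moreover be chosen with $0\le\beta_i<p$ for all $i$.
   Context: $\mathbb{F}$ is an arbitrary field. For $h\in\mathbb{F}[x]$, $A_h$ is the unital associative $\mathbb{F}$-algebra generated by $x,\hat y$ with defining relation $\hat yx-x\hat y=h$; $\mathbb{F}[x]$ is a subalgebra of $A_h$. An irreducible factor $u$ of $h$ is central in $A_h$ iff $u'=0$. *)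

From HB Require Import structures.
From mathcomp Require Import all_boot all_order all_algebra.
Set Implicit Arguments. Unset Strict Implicit. Unset Printing Implicit Defensive.
Import GRing.Theory.
Local Open Scope ring_scope.

(* The algebra A_h = F<x, y^ | y^ x - x y^ = h> is realised concretely through
   its PBW basis: every element is uniquely  sum_i a_i(x) y^^i  with a_i in F[x].
   We represent it by  P : {poly {poly F}}  (outer variable = y^, coefficients
   in F[x], written on the LEFT).  The multiplication is determined by the
   relation  y^ f = f y^ + h f'  for f in F[x]. *)

Section Ah.
Variable F : fieldType.
Variable h : {poly F}.

Definition Ah := {poly {poly F}}.

Definition Dh (f : {poly F}) : {poly F} := h * f^`().

Definition Ymul (Q : Ah) : Ah := Q * 'X + map_poly Dh Q.

Definition amul (P Q : Ah) : Ah :=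
  \sum_(i < size P) (P`_i)%:P * iter i Ymul Q.

Definition ofpoly (f : {poly F}) : Ah := f%:P.

Definition Ah_x : Ah := 'X%:P.
Definition Ah_y : Ah := 'X.

Definition central (z : Ah) : Prop := forall a : Ah, amul z a = amul a z.

Definition normal_elt (v : Ah) : Prop :=
  (forall a : Ah, exists b : Ah, amul v a = amul b v) /\
  (forall a : Ah, exists b : Ah, amul a v = amul v b).

End Ah.

(* Let s be the monic irreducible factors u of h with u' != 0 (these are the
   non-central ones) and  sprod b = prod_{u in s} u^(b u).

   1. [amul] is associative, bilinear and unital, and degrees in y add, so
      A_h is a domain; centrality and normality can be tested on x and y.
   2. Each u | h is normal (u y = (y - (h/u) u') u), hence so is
      sprod b * z for central z.
   3. Conversely a nonzero normal v commutes with x, and v y = (y + g) v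
      for some g in F[x]: every coefficient c of v solves  h c' = -g c.
   4. Arithmetic of F[x]: a nonzero solution a is D-stable (a | h a'), hence
      a = r * sprod b with r' = 0 and every b u < char F; the Wronskian
      W(sprod b, c) then vanishes for every solution c, which forces
      c = t * sprod b with t' = 0.
   5. Dividing v by sprod b coefficientwise gives z, which commutes with x
      and y, hence is central. *)
From HB Require Import structures.
From mathcomp Require Import all_boot all_order all_algebra.
From mathcomp Require Import zify ring.
From Stdlib Require Import Classical.
Set Implicit Arguments. Unset Strict Implicit. Unset Printing Implicit Defensive.
Import GRing.Theory.
Local Open Scope ring_scope.

Section OreProduct.
Variables (F : fieldType) (h : {poly F}).
Local Notation D := (Dh h).
Local Notation Y := (Ymul h).
Local Notation am := (amul h).
Implicit Types (f g u : {poly F}) (P Q R v w z : Ah F).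

Lemma Dh0 : D 0 = 0. Proof. by rewrite /Dh deriv0 mulr0. Qed.
Lemma DhD f g : D (f + g) = D f + D g. Proof. by rewrite /Dh derivD mulrDr. Qed.
Lemma DhC (c : F) : D c%:P = 0. Proof. by rewrite /Dh derivC mulr0. Qed.
Lemma DhM f g : D (f * g) = D f * g + f * D g.
Proof. by rewrite /Dh derivM mulrDr mulrA [h * (f * _)]mulrCA mulrA. Qed.

Lemma coef_mapDh Q i : (map_poly D Q)`_i = D Q`_i.
Proof. by rewrite coef_map_id0 // Dh0. Qed.

Lemma mapDhD P Q : map_poly D (P + Q) = map_poly D P + map_poly D Q.
Proof. by apply/polyP=> i; rewrite coefD !coef_mapDh coefD DhD. Qed.

Lemma mapDh_MXaddC P f : map_poly D (P * 'X + f%:P) = map_poly D P * 'X + (D f)%:P.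
Proof.
apply/polyP=> i; rewrite coef_mapDh !coefD !coefMX !coefC coef_mapDh.
by case: i => [|i] /=; rewrite ?Dh0 ?add0r ?addr0 // coef_mapDh.
Qed.

Lemma mapDhC f : map_poly D f%:P = (D f)%:P.
Proof. by have := mapDh_MXaddC 0 f; rewrite !mul0r !add0r map_poly0 mul0r add0r. Qed.

Lemma mapDhMX Q : map_poly D (Q * 'X) = map_poly D Q * 'X.
Proof. by have := mapDh_MXaddC Q 0; rewrite !addr0 Dh0 addr0. Qed.

Lemma mapDhCM f Q : map_poly D (f%:P * Q) = f%:P * map_poly D Q + (D f)%:P * Q.
Proof. by apply/polyP=> i; rewrite coefD !coefCM !coef_mapDh coefCM DhM addrC mulrC. Qed.

Lemma Ymul0 : Y 0 = 0.
Proof. by rewrite /Ymul mul0r add0r map_poly0. Qed.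
Lemma YmulD P Q : Y (P + Q) = Y P + Y Q.
Proof. by rewrite /Ymul mulrDl mapDhD addrACA. Qed.
Lemma YmulCM f Q : Y (f%:P * Q) = f%:P * Y Q + (D f)%:P * Q.
Proof. by rewrite /Ymul mapDhCM mulrDr addrA mulrA. Qed.
Lemma YmulMX Q : Y (Q * 'X) = Y Q * 'X.
Proof. by rewrite /Ymul mapDhMX mulrDl. Qed.

Lemma amul_widen n P Q : (size P <= n)%N ->
  am P Q = \sum_(i < n) (P`_i)%:P * iter i Y Q.
Proof.
move=> hn; rewrite /amul (big_ord_widen n (fun i => (P`_i)%:P * iter i Y Q) hn).
rewrite big_mkcond; apply: eq_bigr => i _; case: ifP => // /negbT.
by rewrite -leqNgt => /(nth_default 0) ->; rewrite mul0r.
Qed.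

Lemma amul0 Q : am 0 Q = 0.
Proof. by rewrite /amul size_poly0 big_ord0. Qed.

Lemma amul_MXaddC P f Q : am (P * 'X + f%:P) Q = f%:P * Q + am P (Y Q).
Proof.
rewrite (@amul_widen (size P).+1); last by rewrite size_MXaddC; case: ifP.
rewrite big_ord_recl /= coefD coefMX coefC /= add0r; congr (_ + _).
by apply: eq_bigr => i _; rewrite coefD coefMX coefC /= addr0 -iterSr.
Qed.

Lemma amulC f Q : am f%:P Q = f%:P * Q.
Proof. by have := amul_MXaddC 0 f Q; rewrite mul0r add0r amul0 addr0. Qed.

Lemma amul1 Q : am 1 Q = Q.
Proof. by rewrite -polyC1 amulC polyC1 mul1r. Qed.

Lemma amulXl Q : am 'X Q = Y Q.
Proof. by have := amul_MXaddC 1 0 Q; rewrite mul1r mul0r add0r amul1 addr0. Qed.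

Lemma amulDl P1 P2 Q : am (P1 + P2) Q = am P1 Q + am P2 Q.
Proof.
set n := maxn (size P1) (size P2).
rewrite !(@amul_widen n) ?leq_maxl ?leq_maxr ?(leq_trans (size_polyD _ _)) //.
by rewrite -big_split /=; apply: eq_bigr => i _; rewrite coefD polyCD mulrDl.
Qed.

Lemma amulCMl f P Q : am (f%:P * P) Q = f%:P * am P Q.
Proof.
rewrite (@amul_widen (size P)); last by rewrite mul_polyC size_scale_leq.
by rewrite /amul mulr_sumr; apply: eq_bigr => i _; rewrite coefCM polyCM mulrA.
Qed.

Lemma amulDr P Q1 Q2 : am P (Q1 + Q2) = am P Q1 + am P Q2.
Proof.
elim/poly_ind: P Q1 Q2 => [|P c IH] Q1 Q2; first by rewrite !amul0 addr0.
by rewrite !amul_MXaddC YmulD IH mulrDr addrACA.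
Qed.

Lemma amulr0 P : am P 0 = 0.
Proof.
by elim/poly_ind: P => [|P c IH]; rewrite ?amul0 // amul_MXaddC Ymul0 IH mulr0 addr0.
Qed.

Lemma amulY Q R : am (Y Q) R = Y (am Q R).
Proof.
elim/poly_ind: Q R => [|Q d IH] R; first by rewrite Ymul0 amul0 Ymul0.
have YQd : Y (Q * 'X + d%:P) = (Y Q + d%:P) * 'X + (D d)%:P.
  by rewrite /Ymul mapDh_MXaddC !mulrDl -!addrA; congr (_ + _); rewrite addrCA.
rewrite YQd !amul_MXaddC amulDl IH amulC YmulD YmulCM.
by rewrite [Y _ + _]addrC addrA [(D d)%:P * R + _]addrC.
Qed.

Lemma amulA P Q R : am (am P Q) R = am P (am Q R).
Proof.
elim/poly_ind: P Q => [|P c IH] Q; first by rewrite !amul0.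
by rewrite !amul_MXaddC amulDl amulCMl IH amulY.
Qed.

Lemma amulMX P Q : am P (Q * 'X) = am P Q * 'X.
Proof.
elim/poly_ind: P Q => [|P c IH] Q; first by rewrite !amul0 mul0r.
by rewrite !amul_MXaddC YmulMX IH mulrDl mulrA.
Qed.

Lemma amul_constCM P f Q : D f = 0 -> am P (f%:P * Q) = f%:P * am P Q.
Proof.
move=> Df0; elim/poly_ind: P Q => [|P c IH] Q; first by rewrite !amul0 mulr0.
by rewrite !amul_MXaddC YmulCM Df0 mul0r addr0 IH mulrDr mulrCA.
Qed.

Lemma amulr1 P : am P 1 = P.
Proof.
elim/poly_ind: P => [|P c IH]; first by rewrite amul0.
have Y1 : Y 1 = 1 * 'X by rewrite /Ymul -polyC1 mapDhC DhC addr0.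
by rewrite amul_MXaddC mulr1 Y1 amulMX IH addrC.
Qed.

Lemma amulX P : am P 'X = P * 'X.
Proof. by rewrite -[X in am P X]mul1r amulMX amulr1. Qed.

Lemma amul_constC P f : D f = 0 -> am P f%:P = f%:P * P.
Proof. by move=> Df0; have := amul_constCM P 1 Df0; rewrite !mulr1 amulr1. Qed.

Lemma Ymul_size Q : Q != 0 -> size (Y Q) = (size Q).+1 /\ lead_coef (Y Q) = lead_coef Q.
Proof.
move=> Q0; have hs : (size (map_poly D Q) < size (Q * 'X)%R)%N.
  by rewrite size_mulX // ltnS size_poly.
by rewrite /Ymul size_addl // lead_coefDl // size_mulX // lead_coefMX.
Qed.

Lemma amul_size P Q : P != 0 -> Q != 0 ->
  size (am P Q) = (size P + size Q).-1 /\ lead_coef (am P Q) = lead_coef P * lead_coef Q.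
Proof.
elim/poly_ind: P Q => [|P c IH] Q; first by rewrite eqxx.
move=> Pc0 Q0; have [P0|P0] := eqVneq P 0.
  move: Pc0; rewrite P0 mul0r add0r polyC_eq0 => c0.
  by rewrite amulC size_Cmul ?lead_coefM ?lead_coefC // size_polyC c0.
have YQ0 : Y Q != 0 by rewrite -size_poly_gt0 (Ymul_size Q0).1.
have [sPY lPY] := IH _ P0 YQ0; have [sY lY] := Ymul_size Q0.
have hc : (size (c%:P * Q)%R < size (am P (Y Q)))%N.
  rewrite sPY sY addnS /= mul_polyC (leq_ltn_trans (size_scale_leq _ _)) //.
  by rewrite -[X in (X < _)%N]add0n ltn_add2r size_poly_gt0.
have hP : (size c%:P < size (P * 'X)%R)%N.
  by rewrite size_mulX // ltnS size_polyC (leq_trans (leq_b1 _)) // size_poly_gt0.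
rewrite amul_MXaddC addrC size_addl // lead_coefDl // sPY lPY lY.
by rewrite (lead_coefDl hP) (size_addl hP) size_mulX // lead_coefMX sY addnS.
Qed.

Lemma Ah_ind (Pr : Ah F -> Prop) :
  (forall P Q, Pr P -> Pr Q -> Pr (P + Q)) ->
  (forall P Q, Pr P -> Pr Q -> Pr (am P Q)) ->
  (forall c : F, Pr c%:P%:P) -> Pr 'X%:P -> Pr 'X -> forall P, Pr P.
Proof.
move=> PrD PrM PrC Prx Pry.
have Pr0 : Pr 0 by have := PrC 0; rewrite !polyC0.
have PrF f : Pr f%:P.
  elim/poly_ind: f => [|f c IH]; first by rewrite polyC0.
  by rewrite polyCD polyCM -amulC; apply: PrD => //; apply: PrM.
elim/poly_ind => [//|P f IH].
by rewrite -amulX; apply: PrD => //; apply: PrM.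
Qed.

Lemma central_gen z : am z 'X%:P = am 'X%:P z -> am z 'X = am 'X z -> central h z.
Proof.
move=> zx zy; apply: Ah_ind => //.
- by move=> P Q zP zQ; rewrite amulDr amulDl zP zQ.
- by move=> P Q zP zQ; rewrite -amulA zP amulA zQ amulA.
- by move=> c; rewrite amulC amul_constC // DhC.
Qed.

Definition left_normal v P := exists Q, am v P = am Q v.
Definition right_normal v P := exists Q, am P v = am v Q.

Lemma left_normal_gen v :
  left_normal v 'X%:P -> left_normal v 'X -> forall P, left_normal v P.
Proof.
move=> vx vy; apply: Ah_ind => //.
- by move=> P Q [P' eP] [Q' eQ]; exists (P' + Q'); rewrite amulDr amulDl eP eQ.
- by move=> P Q [P' eP] [Q' eQ]; exists (am P' Q'); rewrite -amulA eP amulA eQ amulA.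
- by move=> c; exists c%:P%:P; rewrite amulC amul_constC // DhC.
Qed.

Lemma right_normal_gen v :
  right_normal v 'X%:P -> right_normal v 'X -> forall P, right_normal v P.
Proof.
move=> vx vy; apply: Ah_ind => //.
- by move=> P Q [P' eP] [Q' eQ]; exists (P' + Q'); rewrite amulDr amulDl eP eQ.
- by move=> P Q [P' eP] [Q' eQ]; exists (am P' Q'); rewrite amulA eQ -amulA eP amulA.
- by move=> c; exists c%:P%:P; rewrite amulC amul_constC // DhC.
Qed.

Lemma normal1 : normal_elt h 1.
Proof. by split=> P; exists P; rewrite amul1 amulr1. Qed.

Lemma normal_mul v w : normal_elt h v -> normal_elt h w -> normal_elt h (am v w).
Proof.
move=> [lv rv] [lw rw]; split=> P.
  have [Q eQ] := lw P; have [R eR] := lv Q.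
  by exists R; rewrite amulA eQ -amulA eR amulA.
have [Q eQ] := rv P; have [R eR] := rw Q.
by exists R; rewrite -amulA eQ amulA eR amulA.
Qed.

Lemma normal_mul_central v z : normal_elt h v -> central h z -> normal_elt h (am v z).
Proof.
move=> [lv rv] cz; split=> P.
  by have [Q eQ] := lv P; exists Q; rewrite amulA (cz P) -amulA eQ amulA.
by have [Q eQ] := rv P; exists Q; rewrite -amulA eQ amulA -(cz Q) amulA.
Qed.

(* A divisor u of h is normal:  y u = u (y + w)  and  u y = (y - w) u,
   where w = (h/u) u'. *)
Lemma normal_divisor u : u %| h -> normal_elt h (ofpoly u).
Proof.
move=> uh; rewrite /ofpoly; set w := h %/ u * u^`().
have Yu : Y u%:P = u%:P * 'X + (w * u)%:P.
  by rewrite /Ymul mapDhC /Dh /w -{1}(divpK uh) mulrAC mulrC.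
split.
  apply: left_normal_gen; first by exists 'X%:P; rewrite !amulC mulrC.
  exists ('X + (- w)%:P); rewrite amulX amulDl amulXl amulC Yu -addrA.
  by rewrite polyCN mulNr polyCM addrN addr0 mulrC.
apply: right_normal_gen; first by exists 'X%:P; rewrite !amulC mulrC.
exists ('X + w%:P); rewrite amulXl Yu amulC mulrDr polyCM.
by rewrite [u%:P * w%:P]mulrC [u%:P * 'X]mulrC.
Qed.

(* Bookkeeping for degree comparisons: if deg (b v) = deg v + k then deg b = k. *)
Lemma size_factor_eq (k a c : nat) : (0 < c)%N -> (c + k)%N = (a + c).-1 -> a = k.+1.
Proof. lia. Qed.

Lemma left_normal_x v : v != 0 -> left_normal v 'X%:P -> am v 'X%:P = 'X%:P * v.
Proof.
move=> v0 [b e].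
have x0 : 'X%:P != 0 :> Ah F by rewrite polyC_eq0 polyX_eq0.
have [s1 l1] := amul_size v0 x0.
rewrite size_polyC polyX_eq0 addn1 /= lead_coefC in s1 l1.
have b0 : b != 0.
  by apply: contra_eq_neq s1; rewrite e => ->; rewrite amul0 size_poly0 eq_sym size_poly_eq0.
have [s2 l2] := amul_size b0 v0; rewrite -e s1 in s2 l2.
have sb : size b = 1%N by apply: (@size_factor_eq 0 _ (size v)); rewrite ?size_poly_gt0 ?addn0.
have lb : lead_coef b = b`_0 by rewrite /lead_coef sb.
have b0X : b`_0 = 'X.
  by apply: (@mulfI _ (lead_coef v)); rewrite ?lead_coef_eq0 // -lb mulrC -l2 l1.
by rewrite e (size1_polyC (eq_leq sb)) b0X amulC.
Qed.

(* ... and v y = b v forces b = y + g for some g in F[x], which means that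
   the coefficients of v satisfy  D v = - g v. *)
Lemma left_normal_y v : v != 0 -> left_normal v 'X -> exists g, map_poly D v = - (g%:P * v).
Proof.
move=> v0 [b e].
have X0 : 'X != 0 :> Ah F by rewrite polyX_eq0.
have [s1 l1] := amul_size v0 X0.
rewrite size_polyX addn2 /= lead_coefX mulr1 in s1 l1.
have b0 : b != 0 by apply: contra_eq_neq s1; rewrite e => ->; rewrite amul0 size_poly0.
have [s2 l2] := amul_size b0 v0; rewrite -e s1 in s2 l2.
have sb : size b = 2%N by apply: (@size_factor_eq 1 _ (size v)); rewrite ?size_poly_gt0 ?addn1.
have lb : lead_coef b = 1.
  by apply: (@mulIf _ (lead_coef v)); rewrite ?lead_coef_eq0 // mul1r -l2 l1.
have eb : b = 'X + (b`_0)%:P.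
  apply/polyP=> i; rewrite coefD coefX coefC.
  case: i => [|[|i]] /=; first by rewrite add0r.
    by rewrite addr0 -lb /lead_coef sb.
  by rewrite addr0 nth_default // sb.
move: e; rewrite amulX eb amulDl amulXl amulC /Ymul -addrA -[X in X = _]addr0.
by move=> /addrI /esym /eqP; rewrite addr_eq0 => /eqP; exists b`_0.
Qed.

End OreProduct.

Section PolyFacts.
Variable F : fieldType.
Implicit Types (a c f g m t u w : {poly F}).

(* The Wronskian  W(f, g) = f g' - f' g;  W(f, g) = 0 says f'/f = g'/g. *)
Definition wronsk f g := f * g^`() - f^`() * g.

Lemma wronskMl f g k : wronsk (k * f) (k * g) = k ^+ 2 * wronsk f g.
Proof. by rewrite /wronsk !derivM; ring. Qed.

Lemma wronsk_constMl r f g : r^`() = 0 -> wronsk (r * f) g = r * wronsk f g.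
Proof. by move=> r'0; rewrite /wronsk derivM r'0 mul0r add0r; ring. Qed.

Lemma wronsk_selfMr f t : wronsk f (t * f) = f ^+ 2 * t^`().
Proof. by rewrite /wronsk derivM; ring. Qed.

Lemma poly_size_ind (Pr : {poly F} -> Prop) :
  (forall a, (forall c, (size c < size a)%N -> Pr c) -> Pr a) -> forall a, Pr a.
Proof.
move=> IH a; move: {2}(size a) (leqnn (size a)) => n.
elim: n a => [|n IHn] a san; apply: IH => c sc.
  by move: sc; rewrite ltnNge (leq_trans san).
by apply: IHn; rewrite -ltnS (leq_trans sc).
Qed.

Lemma size_mul_lt t m : t != 0 -> (1 < size m)%N -> (size t < size (t * m)%R)%N.
Proof.
move=> t0 m1; rewrite size_mul // -?size_poly_gt0 ?(ltnW m1) //.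
by rewrite -(subnKC m1) addnS /= -addSnnS ltn_addr.
Qed.

Lemma exists_irreducible_factor a : (1 < size a)%N -> exists2 w, irreducible_poly w & w %| a.
Proof.
elim/poly_size_ind: a => a IH a1.
have [ia|nia] := classic (irreducible_poly a); first by exists a.
have [q] : exists q : {poly F}, ~ (size q != 1%N -> q %| a -> q %= a).
  by apply: not_all_ex_not => H; apply: nia; split.
move=> nq; have [sq {}nq] := imply_to_and _ _ nq; have [qa nqa] := imply_to_and _ _ nq.
have a0 : a != 0 by rewrite -size_poly_gt0 (ltn_trans _ a1).
have q0 : q != 0 by apply: contraTneq qa => ->; rewrite dvd0p.
have lq : (size q < size a)%N.
  by rewrite ltn_neqAle dvdp_leq // andbT dvdp_size_eqp //; apply/negP.
have q1 : (1 < size q)%N by move: sq q0; rewrite -size_poly_gt0; case: (size q) => [|[|]].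
by have [w iw wq] := IH q lq q1; exists w => //; apply: dvdp_trans qa.
Qed.

Lemma coprimep_deriv u : irreducible_poly u -> u^`() != 0 -> coprimep u u^`().
Proof.
move=> iu u'0; rewrite irreducible_poly_coprime //; apply/negP => /(dvdp_leq u'0).
by rewrite leqNgt lt_size_deriv // irredp_neq0.
Qed.

Lemma natr_neq0_below_pchar k : (0 < k)%N ->
  (forall p, p \in [pchar F] -> (k < p)%N) -> k%:R != 0 :> F.
Proof.
move=> k0 kp; apply/eqP => k0F; have [p pc] := natf0_pchar k0 (introT eqP k0F).
by have := dvdn_leq k0 (etrans (dvdn_pcharf pc k) (introT eqP k0F)); rewrite leqNgt kp.
Qed.

Lemma deriv_exp_pchar w p : p \in [pchar F] -> (w ^+ p)^`() = 0.
Proof. by move=> pc; rewrite deriv_exp -mulr_natl -polyC_natr (pcharf0 pc) polyC0 mul0r. Qed.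

Lemma size_exp_gt w k : (1 < size w)%N -> (k < size (w ^+ k))%N.
Proof.
move=> w1; have w0 : w != 0 by rewrite -size_poly_gt0 ltnW.
have wk0 : (0 < size (w ^+ k))%N by rewrite size_poly_gt0 expf_neq0.
by rewrite -(prednK wk0) ltnS size_exp leq_pmull // -ltnS prednK // ltnW.
Qed.

End PolyFacts.

Section DInvariant.
Variables (F : fieldType) (h : {poly F}).
Implicit Types (a m t u w : {poly F}).

(* The ideal (a) of F[x] is stable under the derivation D = h d/dx. *)
Definition D_invariant a := a %| h * a^`().

Lemma D_invariantMr_const t m : m != 0 -> m^`() = 0 ->
  D_invariant (t * m) = D_invariant t.
Proof. by move=> m0 m'0; rewrite /D_invariant derivM m'0 mulr0 addr0 mulrA dvdp_mul2r. Qed.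

Lemma D_invariant_divisor a u : u %| h -> u != 0 -> D_invariant (a * u) -> D_invariant a.
Proof.
move=> uh u0; rewrite /D_invariant; set hu := h %/ u.
have -> : h * (a * u)^`() = u * (h * a^`()) + a * u * (hu * u^`()).
  by rewrite -{1 2}(divpK uh) derivM -/hu; ring.
by rewrite dvdp_addl ?(dvdp_mulr _ (dvdpp _)) // [u * _]mulrC dvdp_mul2r.
Qed.

Lemma D_invariant_pow_step w a j : coprimep w h -> coprimep w w^`() ->
  D_invariant a -> w ^+ j.+1 %| a -> (j.+1)%:R != 0 :> F -> w ^+ j.+2 %| a.
Proof.
move=> wh ww' Da wja j0; set t := a %/ w ^+ j.+1.
have ea : a = t * w ^+ j.+1 by rewrite divpK.
have wja' : w ^+ j.+1 %| a^`().
  by rewrite -(Gauss_dvdpr _ (coprimep_expl _ wh)) (dvdp_trans wja Da).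
have Ea' : a^`() = t^`() * w ^+ j.+1 + w ^+ j * ((j.+1)%:R%:P * (t * w^`())).
  rewrite {1}ea derivM deriv_exp polyC_natr -mulr_natl /=.
  by move: (w ^+ j) ((j.+1)%:R : {poly F}) => W K; ring.
move: wja'; rewrite Ea' dvdp_addr ?(dvdp_mull _ (dvdpp _)) // exprSr dvdp_mul2l ?expf_neq0 //; last first.
  by apply: contraTneq ww' => ->; rewrite deriv0 coprime0p eqp01.
rewrite mul_polyC dvdpZr // Gauss_dvdpl // => wt.
by rewrite ea exprS dvdp_mul.
Qed.

Lemma D_invariant_pow_dvd w a j : coprimep w h -> coprimep w w^`() ->
  D_invariant a -> w %| a -> (forall p, p \in [pchar F] -> (j <= p)%N) -> w ^+ j %| a.
Proof.
move=> wh ww' Da wa jp; elim: j jp => [|j IH] jp; first by rewrite dvd1p.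
case: j IH jp => [|j] IH jp; first by rewrite expr1.
apply: D_invariant_pow_step => //; first by apply: IH => p /jp /ltnW.
by apply: natr_neq0_below_pchar => // p /jp.
Qed.

End DInvariant.

Section NonCentralFactors.
Variables (F : fieldType) (h : {poly F}) (s : seq {poly F}).
Hypothesis s_uniq : uniq s.
Hypothesis s_memP : forall u, u \in s <->
  [/\ u \is monic, irreducible_poly u, u %| h & u^`() != 0].
Implicit Types (a c g r t u w : {poly F}) (b : {poly F} -> nat).

Definition sprod b := \prod_(u <- s) u ^+ b u.
Definition cofactor b u := \prod_(w <- rem u s) w ^+ b w.
Definition below_pchar b := forall u, u \in s -> forall p, p \in [pchar F] -> (b u < p)%N.
Definition set_exp b u k w := if w == u then k else b w.

Lemma sprod_split b u : u \in s -> sprod b = u ^+ b u * cofactor b u.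
Proof. by move=> us; rewrite /sprod (big_rem _ us). Qed.

Lemma sprod_set b u k : u \in s -> sprod (set_exp b u k) = u ^+ k * cofactor b u.
Proof.
move=> us; rewrite (sprod_split _ us) /set_exp eqxx; congr (_ * _).
apply: eq_big_seq => w wr; case: eqP => // wu.
by move: wr; rewrite wu mem_rem_uniqF.
Qed.

Lemma sprod0 : sprod (fun=> 0%N) = 1.
Proof. by rewrite /sprod big1 // => u _; rewrite expr0. Qed.

Lemma below_pchar0 : below_pchar (fun=> 0%N).
Proof. by move=> u _ p /pcharf_prime /prime_gt0. Qed.

Lemma below_pchar_set b u k : below_pchar b ->
  (forall p, p \in [pchar F] -> (k < p)%N) -> below_pchar (set_exp b u k).
Proof. by move=> bp kp w ws p pc; rewrite /set_exp; case: eqP => _; [apply: kp | apply: bp]. Qed.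

Lemma sprod_neq0 b : sprod b != 0.
Proof.
rewrite /sprod big_seq monic_neq0 // monic_prod // => u us.
by apply: monic_exp; have [] := (s_memP u).1 us.
Qed.

(* Distinct monic irreducibles are coprime, so u is coprime to its cofactor. *)
Lemma coprimep_cofactor b u : u \in s -> coprimep u (cofactor b u).
Proof.
move=> us; have [mu iu _ _] := (s_memP u).1 us.
rewrite /cofactor big_seq; apply: (big_ind (coprimep u)) => [|x y|w wr].
- by rewrite coprimep1.
- by rewrite coprimepMr => -> ->.
apply: coprimep_expr; have [mw iw _ _] := (s_memP w).1 (mem_rem wr).
rewrite irreducible_poly_coprime //; apply: contraL wr => uw.
have : u %= w by apply: iw.2 => //; rewrite neq_ltn iu.1 orbT.
by rewrite eqp_monic // => /eqP <-; rewrite mem_rem_uniqF.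
Qed.

Lemma associate_in_s w : irreducible_poly w -> w^`() != 0 -> w %| h ->
  exists2 u, u \in s & u %= w.
Proof.
move=> iw w'0 wh; have c0 : lead_coef w != 0 by rewrite lead_coef_eq0 irredp_neq0.
have uw : (lead_coef w)^-1 *: w %= w by rewrite eqp_scale ?invr_eq0.
exists ((lead_coef w)^-1 *: w) => //; apply/s_memP; split.
- by rewrite monicE lead_coefZ mulVf.
- split; first by rewrite size_scale ?invr_eq0 ?iw.1.
  move=> q sq qu; have qw : q %= w by apply: iw.2; rewrite // -(eqp_dvdr _ uw).
  by apply: eqp_trans qw _; rewrite eqp_sym.
- by rewrite (eqp_dvdl _ uw).
- by rewrite derivZ scaler_eq0 negb_or invr_eq0 c0.
Qed.

(* A D-stable a with no factor in s has zero derivative: an irreducible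
   factor w with w' != 0 is coprime to h, so its multiplicity in a is at
   least char F (impossible in characteristic 0), and w^p can be removed. *)
Lemma D_invariant_const a : a != 0 -> D_invariant h a ->
  (forall u, u \in s -> ~~ (u %| a)) -> a^`() = 0.
Proof.
elim/poly_size_ind: a => a IH a0 Da nsa.
have [sa1|sa1] := leqP (size a) 1; first by rewrite (size1_polyC sa1) derivC.
have [w iw wa] := exists_irreducible_factor sa1; have w0 := irredp_neq0 iw.
have divide m : m %| a -> m^`() = 0 -> (1 < size m)%N -> a^`() = 0.
  move=> ma m'0 m1; set t := a %/ m; have ea : a = t * m by rewrite divpK.
  have m0 : m != 0 by rewrite -size_poly_gt0 ltnW.
  have t0 : t != 0 by apply: contra_neq a0; rewrite ea => ->; rewrite mul0r.
  have t'0 : t^`() = 0.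
    apply: IH => //; first by rewrite ea size_mul_lt.
      by rewrite -(D_invariantMr_const h t m0 m'0) -ea.
    by move=> u us; apply: contra (nsa u us); rewrite ea => /dvdp_mulr ->.
  by rewrite ea derivM t'0 m'0 mul0r mulr0 addr0.
have [w'0|w'0] := eqVneq w^`() 0; first exact: divide w wa w'0 iw.1.
have wh : coprimep w h.
  rewrite irreducible_poly_coprime //; apply/negP => wh.
  by have [u us uw] := associate_in_s iw w'0 wh; move: (nsa u us); rewrite (eqp_dvdl _ uw) wa.
have ww' := coprimep_deriv iw w'0.
have [[p pc]|nochar] := classic (exists p, p \in [pchar F]).
  apply: (divide (w ^+ p)); rewrite ?deriv_exp_pchar //.
    apply: (D_invariant_pow_dvd wh ww' Da wa) => q qc.
    by move: qc; rewrite (pcharf_eq pc) => /eqP ->.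
  by apply: leq_trans (size_exp_gt p iw.1); rewrite ltnS prime_gt0 ?(pcharf_prime pc).
have : w ^+ size a %| a.
  by apply: (D_invariant_pow_dvd wh ww' Da wa) => q qc; case: nochar; exists q.
by move/(dvdp_leq a0); rewrite leqNgt size_exp_gt ?iw.1.
Qed.

(* Multiplying  r * sprod b  (r' = 0) by some u in s keeps this shape: either
   the exponent of u grows, or it reaches char F = p and u^p joins r. *)
Lemma sprod_absorb b r u : below_pchar b -> r^`() = 0 -> u \in s ->
  exists b' r', [/\ below_pchar b', r'^`() = 0 & r * sprod b * u = r' * sprod b'].
Proof.
move=> bp r'0 us.
have [grow|] := classic (forall p, p \in [pchar F] -> ((b u).+1 < p)%N).
  exists (set_exp b u (b u).+1), r; split; first exact: below_pchar_set.
    by [].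
  by rewrite sprod_set // (sprod_split _ us) exprS; ring.
move=> /not_all_ex_not [p] npb; have [pc /negP] := imply_to_and _ _ npb.
rewrite -leqNgt => pb.
have bup : (b u).+1 = p by apply/eqP; rewrite eqn_leq pb bp.
exists (set_exp b u 0), (r * u ^+ p); split.
- by apply: below_pchar_set => // q /pcharf_prime /prime_gt0.
- by rewrite derivM deriv_exp_pchar // r'0 mul0r mulr0 addr0.
- by rewrite sprod_set // (sprod_split _ us) -bup exprS expr0; ring.
Qed.

Lemma D_invariant_factorization a : a != 0 -> D_invariant h a ->
  exists b r, [/\ below_pchar b, r^`() = 0 & a = r * sprod b].
Proof.
elim/poly_size_ind: a => a IH a0 Da.
have [[u us ua]|nsa] := classic (exists2 u, u \in s & u %| a); last first.
  exists (fun=> 0%N), a; rewrite sprod0 mulr1; split => //; first exact: below_pchar0.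
  by apply: D_invariant_const => // u us; apply/negP => ua; apply: nsa; exists u.
have [_ iu uh _] := (s_memP u).1 us; have u0 := irredp_neq0 iu.
set a1 := a %/ u; have ea : a = a1 * u by rewrite divpK.
have a10 : a1 != 0 by apply: contra_neq a0; rewrite ea => ->; rewrite mul0r.
have [|||b1 [r1 [bp r1'0 ea1]]] := IH a1; rewrite ?ea ?size_mul_lt ?iu.1 //.
  by apply: D_invariant_divisor uh u0 _; rewrite -ea.
by have [b [r [bp' r'0 e]]] := sprod_absorb bp r1'0 us; exists b, r; rewrite ea1 e.
Qed.

(* If W(sprod b, c) = 0 then every u in s with b u > 0 divides c: expanding,
   W(u^k R, c) = u^(k-1) (u W(R, c) - k u' R c), and u is coprime to k u' R. *)
Lemma factor_dvd_of_wronsk b u c : below_pchar b -> u \in s -> (0 < b u)%N ->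
  wronsk (sprod b) c = 0 -> u %| c.
Proof.
move=> bp us bu0 W0; have [_ iu _ u'0] := (s_memP u).1 us.
set R := cofactor b u; set k := (b u).-1; have ek : b u = k.+1 by rewrite prednK.
have kF : (k.+1)%:R != 0 :> F by apply: natr_neq0_below_pchar => // p; rewrite -ek; apply: bp.
have E : wronsk (sprod b) c =
    u ^+ k * (u * wronsk R c - (k.+1)%:R * (u^`() * R * c)).
  rewrite (sprod_split _ us) -/R ek /wronsk derivM deriv_exp /= -mulr_natl exprS.
  by move: (u ^+ k) ((k.+1)%:R : {poly F}) => W K; ring.
move: W0; rewrite E => /eqP; rewrite mulf_eq0 expf_eq0 (negPf (irredp_neq0 iu)) andbF.
rewrite subr_eq0 => /eqP uW.
have : u %| (k.+1)%:R * (u^`() * R * c) by rewrite -uW dvdp_mulr.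
rewrite -polyC_natr mul_polyC dvdpZr // -mulrA Gauss_dvdpr ?coprimep_deriv //.
by rewrite Gauss_dvdpr // coprimep_cofactor.
Qed.

(* Hence W(sprod b, c) = 0 forces sprod b | c (induction on the degree of c,
   peeling one factor u of sprod b at a time, using W(u f, u g) = u^2 W(f, g)). *)
Lemma sprod_dvd_of_wronsk b c : below_pchar b -> wronsk (sprod b) c = 0 -> sprod b %| c.
Proof.
elim/poly_size_ind: c b => c IH b bp W0.
have [->|c0] := eqVneq c 0; first by rewrite dvdp0.
have [[u us bu0]|nb] := classic (exists2 u, u \in s & (0 < b u)%N); last first.
  rewrite /sprod big1_seq ?dvd1p // => u /andP[_ us].
  suff -> : b u = 0%N by rewrite expr0.
  by apply/eqP; rewrite -leqn0 leqNgt; apply/negP => bu0; apply: nb; exists u.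
have [_ iu _ _] := (s_memP u).1 us; have u0 := irredp_neq0 iu.
have uc := factor_dvd_of_wronsk bp us bu0 W0.
set c1 := c %/ u; have ec : c = u * c1 by rewrite mulrC divpK.
set b1 := set_exp b u (b u).-1.
have eb : sprod b = u * sprod b1.
  by rewrite sprod_set // (sprod_split _ us) -{1}(prednK bu0) exprS mulrA.
have W1 : wronsk (sprod b1) c1 = 0.
  move: W0; rewrite eb ec wronskMl => /eqP.
  by rewrite mulf_eq0 expf_eq0 (negPf u0) andbF => /eqP.
have c10 : c1 != 0 by apply: contra_neq c0; rewrite ec => ->; rewrite mulr0.
rewrite eb ec dvdp_mul2l //; apply: IH W1; first by rewrite ec mulrC size_mul_lt ?iu.1.
by apply: below_pchar_set => // p pc; apply: leq_ltn_trans (leq_pred _) (bp u us p pc).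
Qed.

Lemma logderiv_common_factor g a : h != 0 -> a != 0 -> h * a^`() = - (g * a) ->
  exists2 b, below_pchar b & forall c, h * c^`() = - (g * c) ->
    sprod b %| c /\ (c %/ sprod b)^`() = 0.
Proof.
move=> h0 a0 ea.
have Da : D_invariant h a by rewrite /D_invariant ea -mulNr dvdp_mull.
have [b [r [bp r'0 ear]]] := D_invariant_factorization a0 Da.
exists b => // c ec; have q0 := sprod_neq0 b.
have r0 : r != 0 by apply: contra_neq a0; rewrite ear => ->; rewrite mul0r.
have Wac : wronsk a c = 0.
  apply: (mulfI h0); rewrite mulr0.
  have -> : h * wronsk a c = a * (h * c^`()) - (h * a^`()) * c by rewrite /wronsk; ring.
  by rewrite ec ea; ring.
have Wqc : wronsk (sprod b) c = 0.
  by apply: (mulfI r0); rewrite mulr0 -wronsk_constMl // -ear.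
have qc := sprod_dvd_of_wronsk bp Wqc; split => //.
apply: (mulfI (expf_neq0 2 q0)); rewrite mulr0 -wronsk_selfMr.
by rewrite divpK.
Qed.

End NonCentralFactors.

Section NormalElements.
Variables (F : fieldType) (h : {poly F}) (s : seq {poly F}).
Hypothesis h0 : h != 0.
Hypothesis s_uniq : uniq s.
Hypothesis s_spec : forall u : {poly F}, u \in s <->
  [/\ u \is monic, irreducible_poly u, u %| h & ~ central h (ofpoly u)].

(* A polynomial u is central in A_h iff u' = 0 (since y u - u y = h u'). *)
Lemma central_ofpolyP u : central h (ofpoly u) <-> u^`() = 0.
Proof.
split=> [cu|u'0 P]; last by rewrite /ofpoly amulC amul_constC // /Dh u'0 mulr0.
have := cu 'X; rewrite /ofpoly amulC amulXl /Ymul mapDhC -[LHS]addr0 => /addrI/esym/eqP.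
by rewrite polyC_eq0 /Dh mulf_eq0 (negPf h0) => /eqP.
Qed.

Lemma s_memP u : u \in s <-> [/\ u \is monic, irreducible_poly u, u %| h & u^`() != 0].
Proof.
rewrite s_spec; split=> [[mu iu uh /central_ofpolyP/eqP]|[mu iu uh /eqP u'0]] //.
by split=> // /central_ofpolyP.
Qed.

Lemma normal_sprod b : normal_elt h (ofpoly (sprod s b)).
Proof.
have normalM f g : normal_elt h (ofpoly f) -> normal_elt h (ofpoly g) ->
    normal_elt h (ofpoly (f * g)).
  by rewrite /ofpoly polyCM -(amulC h); apply: normal_mul.
have normal1F : normal_elt h (ofpoly 1) by rewrite /ofpoly polyC1; apply: normal1.
rewrite /sprod big_seq; apply: (big_ind (fun f => normal_elt h (ofpoly f))) => // u us.
have [_ _ uh _] := (s_memP u).1 us.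
by elim: (b u) => [|k IH]; rewrite ?expr0 // exprS; apply: normalM => //; apply: normal_divisor.
Qed.

(* The coefficients of v solve h c' = -g c, so sprod b divides them all with
   quotients of zero derivative; the quotient z commutes with y, and with x
   because v does. *)
Lemma normal_factorization v : normal_elt h v ->
  exists b z, [/\ below_pchar s b, central h z & v = amul h (ofpoly (sprod s b)) z].
Proof.
move=> nv; have [->|v0] := eqVneq v 0.
  exists (fun=> 0%N), 0; split; first exact: below_pchar0.
    by move=> P; rewrite amul0 amulr0.
  by rewrite amulr0.
have vx := left_normal_x v0 (nv.1 'X%:P).
have [g eg] := left_normal_y v0 (nv.1 'X).
have coef_eq i : h * (v`_i)^`() = - (g * v`_i).
  have := congr1 (fun P : Ah F => P`_i) eg.
  by rewrite coef_mapDh coefN coefCM.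
have lc0 : v`_(size v).-1 != 0 by rewrite -/(lead_coef v) lead_coef_eq0.
have [b bp dvq] := logderiv_common_factor s_uniq s_memP h0 lc0 (coef_eq _).
set q := sprod s b; have q0 : q != 0 := sprod_neq0 s_memP b.
set z := map_poly (fun c => c %/ q) v.
have coef_z i : z`_i = v`_i %/ q by rewrite coef_map_id0 // div0p.
have ev : v = q%:P * z.
  by apply/polyP => i; rewrite coefCM coef_z mulrC divpK //; case: (dvq _ (coef_eq i)).
exists b, z; split=> //; last by rewrite /ofpoly amulC -ev.
apply: central_gen.
  apply: (@mulfI _ q%:P); first by rewrite polyC_eq0.
  by rewrite -amulCMl -ev vx ev amulC mulrCA.
rewrite amulX amulXl /Ymul (_ : map_poly _ z = 0) ?addr0 //.
by apply/polyP => i; rewrite coef_mapDh coef_z coef0 /Dh (dvq _ (coef_eq i)).2 mulr0.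
Qed.

End NormalElements.

Theorem theorem7p2 (F : fieldType) (h : {poly F}) (hnz : h != 0)
    (s : seq {poly F}) (s_uniq : uniq s)
    (s_spec : forall u : {poly F}, u \in s <->
        [/\ u \is monic, irreducible_poly u, u %| h & ~ central h (ofpoly u)]) :
  (forall v : Ah F,
     normal_elt h v <->
     exists (beta : {poly F} -> nat) (z : Ah F),
       central h z /\ v = amul h (ofpoly (\prod_(u <- s) u ^+ beta u)) z) /\
  (forall p : nat, p \in [pchar F] ->
     forall v : Ah F, normal_elt h v ->
     exists (beta : {poly F} -> nat) (z : Ah F),
       [/\ forall u, u \in s -> (beta u < p)%N,
           central h z &
           v = amul h (ofpoly (\prod_(u <- s) u ^+ beta u)) z]).
Proof.
split=> [v|p pc v nv].
  split=> [nv|[b [z [cz ->]]]].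
    by have [b [z [_ cz ev]]] := normal_factorization hnz s_uniq s_spec nv; exists b, z.
  exact: normal_mul_central (normal_sprod hnz s_spec b) cz.
have [b [z [bp cz ev]]] := normal_factorization hnz s_uniq s_spec nv.
by exists b, z; split=> // u us; apply: bp.
Qed.
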